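(* Let $G$ be a graph with girth $g(G)\ge 7$. Then every color class $C$ of a partition of $V(G)$ into $\chi_{\mu_2}(G)$ many $2$-distance mutual-visibility sets is a subset of the closed neighborhood $N_G[v]$ of some vertex $v$ of $G$. In particular, if $|C|\ge 3$, then $C$ is a subset of the open neighborhood $N_G(v)$ of some vertex $v$ of $G$.
   Context: The girth $g(G)$ is the length of a shortest cycle of $G$, with $g(G)=\infty$ if $G$ is a forest. $N_G(v)$ is the set of neighbors of $v$ and $N_G[v]=N_G(v)\cup\{v\}$. A set $M\subseteq V(G)$ is a $2$-distance mutual-visibility set if for every two vertices $u,v\in M$ there exists a shortest $u,v$-path of length at most $2$ none of whose internal vertices lies in $M$. $\chi_{\mu_2}(G)$ is the minimum cardinality of a partition of $V(G)$ into $2$-distance mutual-visibility sets. *)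

From mathcomp Require Import all_boot.
Set Implicit Arguments. Unset Strict Implicit. Unset Printing Implicit Defensive.

Definition simple_graph (T : finType) (e : rel T) : Prop :=
  symmetric e /\ irreflexive e.

(* Forests (no cycle) satisfy this vacuously (girth = infinity). *)
Definition girth_ge (T : finType) (e : rel T) (n : nat) : Prop :=
  forall c : seq T, ucycle e c -> 3 <= size c -> n <= size c.

Definition Nopen (T : finType) (e : rel T) (v : T) : {set T} := [set u | e v u].
Definition Nclosed (T : finType) (e : rel T) (v : T) : {set T} := v |: Nopen e v.

(* a u,v-path given as the sequence of vertices after u, ending at v;
   its length is size p *)
Definition is_walk (T : finType) (e : rel T) (u v : T) (p : seq T) : Prop :=
  path e u p /\ last u p = v.

Definition is_shortest (T : finType) (e : rel T) (u v : T) (p : seq T) : Prop :=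
  is_walk e u v p /\ forall q, is_walk e u v q -> size p <= size q.

(* internal vertices of the path u :: p (p ends at v) *)
Definition internal (T : eqType) (p : seq T) : seq T := take (size p).-1 p.

Definition dmv2 (T : finType) (e : rel T) (M : {set T}) : Prop :=
  forall u v, u \in M -> v \in M ->
    exists p, is_shortest e u v p /\ size p <= 2 /\
              forall w, w \in internal p -> w \notin M.

Definition dmv2_partition (T : finType) (e : rel T) (P : {set {set T}}) : Prop :=
  partition P [set: T] /\ forall C, C \in P -> dmv2 e C.

Definition optimal_dmv2_partition (T : finType) (e : rel T) (P : {set {set T}}) : Prop :=
  dmv2_partition e P /\ forall Q, dmv2_partition e Q -> #|P| <= #|Q|.

From mathcomp Require Import all_boot.

Set Implicit Arguments.
Unset Strict Implicit.
Unset Printing Implicit Defensive.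

(* Two vertices of a 2-distance mutual-visibility set are at distance at most
   2.  If such a set C contains two non-adjacent vertices a, b with common
   neighbour m, then any vertex of C outside N[m] closes, together with a, m
   and b, a closed walk of length at most 6 which girth at least 7 turns into
   a forbidden cycle; so C lies in N[m], and a set of pairwise adjacent
   vertices lies in N[v] for any of its members v.  If moreover |C| >= 3 and
   v is in C, two further members u, w of C see each other only through a
   vertex outside C, which yields a triangle or a 4-cycle through v. *)

Section LargeGirth.

Variables (T : finType) (e : rel T).
Hypotheses (e_sym : symmetric e) (e_irr : irreflexive e).
Hypothesis e_girth : girth_ge e 7.

Lemma edge_neq x y : e x y -> x != y.
Proof. by apply: contraTneq => ->; rewrite e_irr. Qed.

Lemma edgeC x y : e x y -> e y x.
Proof. by rewrite e_sym. Qed.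

Lemma edge_neqC x y : e x y -> y != x.
Proof. by move/edgeC; apply: edge_neq. Qed.

Lemma no_short_cycle (c : seq T) : ucycle e c -> 3 <= size c <= 6 -> False.
Proof. by move=> uc /andP[c3 c6]; have := leq_trans (e_girth uc c3) c6. Qed.

Lemma no_triangle a b c : e a b -> e b c -> e c a -> False.
Proof.
move=> ab bc ca; apply: (@no_short_cycle [:: a; b; c]) => //.
by rewrite /ucycle /= ab bc ca /= !inE !negb_or (edge_neq ab) (edge_neqC ca)
  (edge_neq bc).
Qed.

Lemma no_4cycle a b c d :
  e a b -> e b c -> e c d -> e d a -> a != c -> b != d -> False.
Proof.
move=> ab bc cd da ac bd; apply: (@no_short_cycle [:: a; b; c; d]) => //.
by rewrite /ucycle /= ab bc cd da /= !inE !negb_or (edge_neq ab) ac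
  (edge_neqC da) (edge_neq bc) bd (edge_neq cd).
Qed.

Lemma no_5cycle a b c d f :
  e a b -> e b c -> e c d -> e d f -> e f a -> False.
Proof.
move=> ab bc cd df fa.
have ac : a != c by apply/eqP=> ac; subst c; apply: (no_triangle cd df fa).
have ad : a != d by apply/eqP=> ad; subst d; apply: (no_triangle ab bc cd).
have bd : b != d by apply/eqP=> bd; subst d; apply: (no_triangle ab df fa).
have bf : b != f by apply/eqP=> bf; subst f; apply: (no_triangle bc cd df).
have cf : c != f by apply/eqP=> cf; subst f; apply: (no_triangle ab bc fa).
apply: (@no_short_cycle [:: a; b; c; d; f]) => //.
by rewrite /ucycle /= ab bc cd df fa /= !inE !negb_or (edge_neq ab) ac ad
  (edge_neqC fa) (edge_neq bc) bd bf (edge_neq cd) cf (edge_neq df).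
Qed.

(* Only the vertices two steps apart need to be assumed distinct: identifying
   two opposite vertices of a closed 6-walk creates a triangle. *)
Lemma no_6cycle a b c d f g :
  e a b -> e b c -> e c d -> e d f -> e f g -> e g a ->
  a != c -> b != d -> c != f -> d != g -> f != a -> g != b -> False.
Proof.
move=> ab bc cd df fg ga ac bd cf dg fa gb.
have ad : a != d by apply/eqP=> ad; subst d; apply: (no_triangle ab bc cd).
have bf : b != f by apply/eqP=> bf; subst f; apply: (no_triangle bc cd df).
have cg : c != g by apply/eqP=> cg; subst g; apply: (no_triangle cd df fg).
apply: (@no_short_cycle [:: a; b; c; d; f; g]) => //.
by rewrite /ucycle /= ab bc cd df fg ga /= !inE !negb_or (edge_neq ab) ac ad
  (eq_sym a f) fa (edge_neqC ga) (edge_neq bc) bd bf (eq_sym b g) gb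
  (edge_neq cd) cf cg (edge_neq df) dg (edge_neq fg).
Qed.

Definition within2 u v := [\/ u = v, e u v | exists x, e u x /\ e x v].

Lemma in_Nopen v u : (u \in Nopen e v) = e v u.
Proof. by rewrite inE. Qed.

Lemma in_Nclosed v u : (u \in Nclosed e v) = (u == v) || e v u.
Proof. by rewrite !inE. Qed.

Lemma within2_common_neighbour a b m c :
  e a m -> e m b -> a != b -> ~~ e a b -> within2 c a -> within2 c b ->
  c \in Nclosed e m.
Proof.
move=> am mb ab nab ca cb; rewrite in_Nclosed; apply/norP=> -[cm nmc].
have ma : e m a by rewrite e_sym.
have ym y : e c y -> m != y.
  by move=> cy; apply: contraNneq nmc => my; rewrite e_sym my.
have {ca} [ca | [y [cy ya]]] : e c a \/ exists y, e c y /\ e y a.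
  by case: ca => [ca | | ]; [rewrite ca ma in nmc | left | right].
- case: cb => [cb | cb | [x [cx xb]]]; first by rewrite cb mb in nmc.
  + exact: (no_4cycle ca am mb (edgeC cb) cm ab).
  + exact: (no_5cycle ca am mb (edgeC xb) (edgeC cx)).
- case: cb => [cb | cb | [x [cx xb]]]; first by rewrite cb mb in nmc.
  + exact: (no_5cycle cb (edgeC mb) ma (edgeC ya) (edgeC cy)).
  + have [xy | xy] := eqVneq x y.
      by rewrite xy in xb; exact: (no_4cycle am mb (edgeC xb) ya ab (ym y cy)).
    have ac : c != a by apply: contraNneq nmc => ->.
    have bc : b != c by apply: contraNneq nmc => <-.
    apply: (no_6cycle cy ya am mb (edgeC xb) (edgeC cx)) => //.
    * by rewrite eq_sym ym.
    * exact: ym cx.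
Qed.

Lemma within2_sub_Nclosed (S : {set T}) :
  S != set0 -> {in S &, forall u v, within2 u v} ->
  exists v, S \subset Nclosed e v.
Proof.
move=> /set0Pn[v0 Sv0] S2.
case: (boolP [exists a in S, exists b in S, (a != b) && ~~ e a b]).
  move=> /exists_inP[a Sa /exists_inP[b Sb /andP[ab nab]]].
  have [m [am mb]] : exists m, e a m /\ e m b.
    case: (S2 a b Sa Sb) => [/eqP | | //]; last by rewrite (negbTE nab).
    by rewrite (negbTE ab).
  exists m; apply/subsetP=> c Sc.
  exact: (within2_common_neighbour am mb ab nab (S2 c a Sc Sa) (S2 c b Sc Sb)).
move=> /exists_inPn clique; exists v0; apply/subsetP=> c Sc.
move/exists_inPn: (clique c Sc) => /(_ v0 Sv0).
by rewrite in_Nclosed negb_and !negbK e_sym.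
Qed.

Lemma dmv2_edge_or_detour (M : {set T}) u w :
  dmv2 e M -> u \in M -> w \in M ->
  [\/ u = w, e u w | exists x, [/\ e u x, e x w & x \notin M]].
Proof.
move=> dmvM Mu Mw; have [p [[[up pw] _] [p2 pM]]] := dmvM u w Mu Mw.
case: p up pw p2 pM => [|x [|y [|z p]]] //=; rewrite ?andbT.
- by move=> _ -> _ _; apply: Or31.
- by move=> ux <- _ _; apply: Or32.
- move=> /andP[ux xy] <- _ pM; apply: Or33; exists x; split=> //.
  by apply: pM; rewrite /internal /= inE.
Qed.

Lemma dmv2_within2 (M : {set T}) :
  dmv2 e M -> {in M &, forall u v, within2 u v}.
Proof.
move=> dmvM u w Mu Mw.
by case: (dmv2_edge_or_detour dmvM Mu Mw) => [? | ? | [x [ux xw _]]];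
  [apply: Or31 | apply: Or32 | apply: Or33; exists x].
Qed.

Lemma dmv2_sub_Nopen (C : {set T}) v :
  dmv2 e C -> C \subset Nclosed e v -> 2 < #|C| -> C \subset Nopen e v.
Proof.
move=> dmvC CN C3.
have vNC : v \notin C.
  apply/negP=> Cv.
  have /card_gt1P[u [w [Cu Cw uw]]] : 1 < #|C :\ v|.
    by rewrite (cardsD1 v C) Cv in C3.
  move: Cu Cw; rewrite !inE => /andP[uv Cu] /andP[wv Cw].
  have vu : e v u by move: (subsetP CN u Cu); rewrite in_Nclosed (negbTE uv).
  have vw : e v w by move: (subsetP CN w Cw); rewrite in_Nclosed (negbTE wv).
  case: (dmv2_edge_or_detour dmvC Cu Cw) => [/eqP | uw' | [x [ux xw Cx]]].
  - by rewrite (negbTE uw).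
  - exact: (no_triangle uw' (edgeC vw) vu).
  - by apply: (no_4cycle vu ux xw (edgeC vw) _ uw); apply: contraNneq Cx => <-.
apply/subsetP=> c Cc; move: (subsetP CN c Cc); rewrite in_Nclosed in_Nopen.
by case: eqP => // cv; rewrite -cv Cc in vNC.
Qed.

End LargeGirth.

Theorem lemma3p3 (T : finType) (e : rel T) (P : {set {set T}}) :
  simple_graph e -> girth_ge e 7 -> optimal_dmv2_partition e P ->
  forall C, C \in P ->
    (exists v, C \subset Nclosed e v) /\
    (3 <= #|C| -> exists v, C \subset Nopen e v).
Proof.
move=> [e_sym e_irr] e_girth [[partP dmvP] _] C PC.
have dmvC := dmvP C PC.
have [v CN] : exists v, C \subset Nclosed e v.
  exact: within2_sub_Nclosed (partition_neq0 partP PC) (dmv2_within2 dmvC).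
split=> [|C3]; exists v => //.
exact: dmv2_sub_Nopen.
Qed.
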